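(* Assume $(H,T)$ satisfies the Standing Assumption (Assumption A). Let $[\gamma],[\eta]\in H/T$ and suppose there exist $\gamma'\in[\gamma]$ and $\eta'\in[\eta]$ with $(\gamma',\eta')\in H^{(2)}$. Then for every $\gamma''\in[\gamma]$ there is a unique $\eta''\in[\eta]$ with $(\gamma'',\eta'')\in H^{(2)}$.
   Context: Standing Assumption (Assumption A). $H$ is a Hausdorff étale groupoid with $H^{(0)}=T$, and $p:T\to X$ is an open quotient map such that each $T_x:=p^{-1}(x)$ is a compact Abelian group (so $T$ is a bundle of compact Abelian groups over $X$; this group structure is not the groupoid structure of $H$). Put $p_s=p\circ s$, $p_r=p\circ r$ on $H$. Write $t{\blacktriangleright}\eta$ (defined when $p(t)=p_r(\eta)$) for a left action and $\eta{\blacktriangleleft}t$ (defined when $p(t)=p_s(\eta)$) for a right action of the group bundle $T$ on $H$. Then: (1) these left and right actions are continuous, commute, and are free and proper, with (a) $t{\blacktriangleright}u=u{\blacktriangleleft}t$ for all $u\in H^{(0)}$, $t\in T$; (b) $r(t{\blacktriangleright}\gamma)=t{\blacktriangleright}r(\gamma)$ for $\gamma\in p_r^{-1}(p(t))$ and $s(\eta{\blacktriangleleft}t)=s(\eta){\blacktriangleleft}t$ for $\eta\in p_s^{-1}(p(t))$; (2) there are continuous maps $\lambda:H\,{}_{p_s}\!*_p\,T\to T$, $(\eta,t)\mapsto\lambda_\eta(t)$, and $\rho:T\,{}_p\!*_{p_r}\,H\to T$, $(t,\eta)\mapsto\rho_\eta(t)$, such that for all $\gamma,\eta\in H$ and $t\in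 T$ (whenever defined): (a) $\eta{\blacktriangleleft}t=\lambda_\eta(t){\blacktriangleright}\eta$; (b) $t{\blacktriangleright}\eta=\eta{\blacktriangleleft}\rho_\eta(t)$; (c) $(\gamma\eta){\blacktriangleleft}t=(\gamma{\blacktriangleleft}\lambda_\eta(t))(\eta{\blacktriangleleft}t)$; (d) $t{\blacktriangleright}(\gamma\eta)=(t{\blacktriangleright}\gamma)(\rho_\gamma(t){\blacktriangleright}\eta)$; (e) $(\eta{\blacktriangleleft}t)^{-1}=t{\blacktriangleright}\eta^{-1}$; (f) $(t{\blacktriangleright}\eta)^{-1}=\eta^{-1}{\blacktriangleleft}t$. $H/T$ is the quotient of $H$ by the right $T$-action; $[\eta]=\{\eta{\blacktriangleleft}t:t\in T_{p_s(\eta)}\}$ (equivalently the left $T$-orbit of $\eta$). *)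

From HB Require Import structures.
From mathcomp Require Import all_boot all_order.
From mathcomp Require Import all_classical all_reals all_analysis.
Set Implicit Arguments. Unset Strict Implicit. Unset Printing Implicit Defensive.
Local Open Scope classical_set_scope.

Section Defs.
Variables (H T X : topologicalType).

(* iota : T -> H is the inclusion of the unit space H^(0) = T into H;
   r, s : H -> T are range and source; comp g h is the product g h, meaningful
   when (g,h) is in H^(2), i.e. s g = r h; inv is the inverse. *)
Definition composable (r s : H -> T) (g h : H) : Prop := s g = r h.

Record etale_groupoid (iota : T -> H) (r s : H -> T)
    (comp : H -> H -> H) (inv : H -> H) : Prop := {
  gr_r_unit : forall u, r (iota u) = u;
  gr_s_unit : forall u, s (iota u) = u;
  gr_r_comp : forall g h, s g = r h -> r (comp g h) = r g;
  gr_s_comp : forall g h, s g = r h -> s (comp g h) = s h;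
  gr_assoc : forall g h k, s g = r h -> s h = r k ->
    comp (comp g h) k = comp g (comp h k);
  gr_unitl : forall g, comp (iota (r g)) g = g;
  gr_unitr : forall g, comp g (iota (s g)) = g;
  gr_r_inv : forall g, r (inv g) = s g;
  gr_s_inv : forall g, s (inv g) = r g;
  gr_invr : forall g, comp g (inv g) = iota (r g);
  gr_invl : forall g, comp (inv g) g = iota (s g);
  (* topology: T carries the subspace topology of H^(0) (iota is an embedding) *)
  gr_iota_cont : continuous iota;
  gr_iota_inj : injective iota;
  gr_iota_emb : forall U : set T, open U ->
    exists W : set H, open W /\ iota @` U = W `&` range iota;
  gr_r_cont : continuous r;
  gr_s_cont : continuous s;
  gr_comp_cont : {within [set z : H * H | s z.1 = r z.2],
                    continuous (fun z => comp z.1 z.2)};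
  gr_inv_cont : continuous inv;
  gr_hausdorff : hausdorff_space H;
  gr_etale : forall g, exists U : set H, [/\ open U, U g,
      {in U &, injective r} &
      forall W : set H, open W -> W `<=` U -> open (r @` W)]
}.

Definition open_quotient_map (p : T -> X) : Prop :=
  [/\ continuous p, (forall x, exists t, p t = x),
      (forall V : set X, open V <-> open (p @^-1` V)) &
      (forall U : set T, open U -> open (p @` U))].

(* tmul, tinv, te are the fibrewise group operations and the identity section *)
Record cab_bundle (p : T -> X) (tmul : T -> T -> T) (tinv : T -> T)
    (te : X -> T) : Prop := {
  bd_pe : forall x, p (te x) = x;
  bd_pmul : forall a b, p a = p b -> p (tmul a b) = p a;
  bd_pinv : forall a, p (tinv a) = p a;
  bd_assoc : forall a b c, p a = p b -> p b = p c ->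
    tmul (tmul a b) c = tmul a (tmul b c);
  bd_comm : forall a b, p a = p b -> tmul a b = tmul b a;
  bd_unit : forall a, tmul (te (p a)) a = a;
  bd_inv : forall a, tmul (tinv a) a = te (p a);
  bd_compact : forall x, compact (p @^-1` [set x]);
  bd_mul_cont : {within [set z : T * T | p z.1 = p z.2],
                   continuous (fun z => tmul z.1 z.2)};
  bd_inv_cont : continuous tinv
}.

(* lact t eta = t |> eta (needs p t = p_r eta);
   ract eta t = eta <| t (needs p t = p_s eta);
   lam eta t = lambda_eta(t); rho eta t = rho_eta(t). *)
Record assumptionA (iota : T -> H) (r s : H -> T) (comp : H -> H -> H)
    (inv : H -> H) (p : T -> X) (tmul : T -> T -> T) (tinv : T -> T)
    (te : X -> T) (lact : T -> H -> H) (ract : H -> T -> H)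
    (lam : H -> T -> T) (rho : H -> T -> T) : Prop := {
  A_groupoid : etale_groupoid iota r s comp inv;
  A_quotient : open_quotient_map p;
  A_bundle : cab_bundle p tmul tinv te;
  A_lanchor : forall t g, p t = p (r g) -> p (r (lact t g)) = p t;
  A_lunit : forall g, lact (te (p (r g))) g = g;
  A_lmul : forall a b g, p a = p (r g) -> p b = p (r g) ->
    lact (tmul a b) g = lact a (lact b g);
  A_ranchor : forall g t, p t = p (s g) -> p (s (ract g t)) = p t;
  A_runit : forall g, ract g (te (p (s g))) = g;
  A_rmul : forall a b g, p a = p (s g) -> p b = p (s g) ->
    ract g (tmul a b) = ract (ract g a) b;
  A_lcont : {within [set z : T * H | p z.1 = p (r z.2)],
               continuous (fun z => lact z.1 z.2)};
  A_rcont : {within [set z : H * T | p z.2 = p (s z.1)],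
               continuous (fun z => ract z.1 z.2)};
  A_commute : forall a g b, p a = p (r g) -> p b = p (s g) ->
    ract (lact a g) b = lact a (ract g b);
  A_lfree : forall t g, p t = p (r g) -> lact t g = g -> t = te (p t);
  A_rfree : forall g t, p t = p (s g) -> ract g t = g -> t = te (p t);
  A_lproper : forall K : set (H * H), compact K ->
    compact [set z : T * H | p z.1 = p (r z.2) /\ K (lact z.1 z.2, z.2)];
  A_rproper : forall K : set (H * H), compact K ->
    compact [set z : H * T | p z.2 = p (s z.1) /\ K (ract z.1 z.2, z.1)];
  A_1a : forall u t, p t = p u -> lact t (iota u) = ract (iota u) t;
  A_1b_r : forall t g, p t = p (r g) -> iota (r (lact t g)) = lact t (iota (r g));
  A_1b_s : forall g t, p t = p (s g) -> iota (s (ract g t)) = ract (iota (s g)) t;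
  A_lam_cont : {within [set z : H * T | p (s z.1) = p z.2],
                  continuous (fun z => lam z.1 z.2)};
  A_rho_cont : {within [set z : T * H | p z.1 = p (r z.2)],
                  continuous (fun z => rho z.2 z.1)};
  A_lam_fib : forall g t, p t = p (s g) -> p (lam g t) = p (r g);
  A_rho_fib : forall g t, p t = p (r g) -> p (rho g t) = p (s g);
  A_2a : forall g t, p t = p (s g) -> ract g t = lact (lam g t) g;
  A_2b : forall g t, p t = p (r g) -> lact t g = ract g (rho g t);
  A_2c : forall g h t, s g = r h -> p t = p (s h) ->
    ract (comp g h) t = comp (ract g (lam h t)) (ract h t);
  A_2d : forall g h t, s g = r h -> p t = p (r g) ->
    lact t (comp g h) = comp (lact t g) (lact (rho g t) h);
  A_2e : forall g t, p t = p (s g) -> inv (ract g t) = lact t (inv g);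
  A_2f : forall g t, p t = p (r g) -> inv (lact t g) = ract (inv g) t
}.

(* the class [eta] in H/T: the orbit of eta under the right T-action *)
Definition Torbit (p : T -> X) (s : H -> T) (ract : H -> T -> H) (g : H)
  : set H := [set g' | exists t, p t = p (s g) /\ g' = ract g t].

End Defs.

(* Write gamma'' = gamma' <| t.  Since the unit s gamma' = r eta' satisfies
   u <| t = t |> u, we get s (gamma' <| t) = r (t |> eta') = r (eta' <| rho_eta'(t)),
   which gives existence.  For uniqueness, eta <| d = lambda_eta(d) |> eta and
   r (l |> eta) = l |> r eta; as the left action is free, two elements of [eta]
   with the same range coincide. *)
From mathcomp Require Import all_boot all_order.
From mathcomp Require Import all_classical all_reals all_analysis.

Set Implicit Arguments.
Unset Strict Implicit.
Unset Printing Implicit Defensive.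

Local Open Scope classical_set_scope.

Section GroupBundle.
Variables (T X : topologicalType) (p : T -> X).
Variables (tmul : T -> T -> T) (tinv : T -> T) (te : X -> T).
Hypothesis B : cab_bundle p tmul tinv te.

Lemma tmulV (a : T) : tmul a (tinv a) = te (p a).
Proof. by rewrite (bd_comm B) ?(bd_pinv B) // (bd_inv B). Qed.

Lemma tmulKV (a c : T) : p a = p c -> tmul a (tmul (tinv a) c) = c.
Proof.
move=> pac; rewrite -(bd_assoc B) ?(bd_pinv B) // tmulV pac.
exact: (bd_unit B).
Qed.

Lemma tinv_mul_eq_unit (a b : T) :
  p a = p b -> tmul (tinv b) a = te (p b) -> a = b.
Proof.
move=> pab hba; rewrite -[LHS](tmulKV (esym pab)) hba (bd_comm B) ?(bd_pe B) //.
exact: (bd_unit B).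
Qed.

End GroupBundle.

Section BundleActions.
Variables (H T X : topologicalType).
Variables (iota : T -> H) (r s : H -> T) (comp : H -> H -> H) (inv : H -> H).
Variables (p : T -> X) (tmul : T -> T -> T) (tinv : T -> T) (te : X -> T).
Variables (lact : T -> H -> H) (ract : H -> T -> H) (lam rho : H -> T -> T).
Hypothesis A : assumptionA iota r s comp inv p tmul tinv te lact ract lam rho.

Let G := A_groupoid A.
Let B := A_bundle A.
Local Notation orbit := (Torbit p s ract).

Lemma lact_inj (g : H) (a b : T) :
  p a = p (r g) -> p b = p (r g) -> lact a g = lact b g -> a = b.
Proof.
move=> pa pb hab; have pb' : p (tinv b) = p (r g) by rewrite (bd_pinv B).
apply: (tinv_mul_eq_unit B); first by rewrite pa pb.
have fix_g : lact (tmul (tinv b) a) g = g.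
  rewrite (A_lmul A) // hab -(A_lmul A) // (bd_inv B) pb.
  exact: (A_lunit A).
have pba : p (tmul (tinv b) a) = p (r g) by rewrite (bd_pmul B) ?pb' ?pa.
by rewrite [LHS](A_lfree A pba fix_g) pba pb.
Qed.

Lemma r_lact_inj (h : H) (a b : T) :
  p a = p (r h) -> p b = p (r h) -> r (lact a h) = r (lact b h) -> a = b.
Proof.
move=> pa pb /(congr1 iota); rewrite (A_1b_r A pa) (A_1b_r A pb).
have pru : p (r (iota (r h))) = p (r h) by rewrite (gr_r_unit G).
by apply: lact_inj; rewrite pru.
Qed.

Lemma s_ract_composable (g h : H) (t : T) :
  s g = r h -> p t = p (s g) -> s (ract g t) = r (ract h (rho h t)).
Proof.
move=> sgrh pt; have ptr : p t = p (r h) by rewrite pt sgrh.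
apply: (gr_iota_inj G).
rewrite (A_1b_s A pt) -(A_1a A) ?(gr_s_unit G) // sgrh -(A_1b_r A ptr).
by rewrite (A_2b A ptr).
Qed.

Lemma orbit_ract (h h' : H) (t : T) :
  orbit h h' -> p t = p (s h') -> orbit h (ract h' t).
Proof.
move=> [b [pb ->]]; rewrite (A_ranchor A) // => ptb.
exists (tmul b t); split; first by rewrite (bd_pmul B) ?ptb.
by rewrite (A_rmul A) ?ptb.
Qed.

Lemma orbit_shift (g g' g'' : H) :
  orbit g g' -> orbit g g'' -> exists t, p t = p (s g') /\ g'' = ract g' t.
Proof.
move=> [a [pa ->]] [c [pc ->]]; rewrite (A_ranchor A) //.
have pac : p a = p c by rewrite pa pc.
exists (tmul (tinv a) c); split; first by rewrite (bd_pmul B) ?(bd_pinv B).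
by rewrite -(A_rmul A) ?(bd_pinv B) ?(bd_pmul B) ?(bd_pinv B) ?pac ?(tmulKV B).
Qed.

Lemma orbit_r_inj (h x y : H) :
  orbit h x -> orbit h y -> r x = r y -> x = y.
Proof.
move=> [d1 [pd1 ->]] [d2 [pd2 ->]]; rewrite (A_2a A pd1) (A_2a A pd2).
by move/r_lact_inj => -> //; rewrite (A_lam_fib A).
Qed.

End BundleActions.

Theorem mainTheorem10 (H T X : topologicalType)
  (iota : T -> H) (r s : H -> T) (comp : H -> H -> H) (inv : H -> H)
  (p : T -> X) (tmul : T -> T -> T) (tinv : T -> T) (te : X -> T)
  (lact : T -> H -> H) (ract : H -> T -> H)
  (lam : H -> T -> T) (rho : H -> T -> T) :
  assumptionA iota r s comp inv p tmul tinv te lact ract lam rho ->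
  forall gamma eta : H,
  (exists gamma' eta', Torbit p s ract gamma gamma' /\
     Torbit p s ract eta eta' /\ composable r s gamma' eta') ->
  forall gamma'', Torbit p s ract gamma gamma'' ->
  exists! eta'', Torbit p s ract eta eta'' /\ composable r s gamma'' eta''.
Proof.
move=> A gamma eta [g' [e' [Og' [Oe' sgre]]]] g'' Og''.
have [t [pt ->]] := orbit_shift A Og' Og''.
have prho : p (rho e' t) = p (s e') by rewrite (A_rho_fib A) // pt sgre.
have Oe'' := orbit_ract A Oe' prho.
have se'' := s_ract_composable A sgre pt.
exists (ract e' (rho e' t)); split=> // x [Ox sx].
by apply: (orbit_r_inj A Oe'' Ox); rewrite -se''.
Qed.
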